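(* Let $R$ be a commutative Noetherian semiring and let $I$ be a $k$-ideal of $R$. Then $I$ can be represented as a finite intersection $I=\bigcap_{i=1}^n Q_i$ of primary ideals $Q_i$ of $R$; that is, $I$ has a reduced primary decomposition.
   Context: A semiring is a set $R$ with addition and multiplication such that $(R,+)$ is a commutative monoid with identity $0$, $(R,\cdot)$ is a monoid with identity $1$, multiplication distributes over addition on both sides, $0\cdot r=0=r\cdot 0$ for all $r$, and $1\neq 0$. $R$ is commutative if $(R,\cdot)$ is commutative. An ideal of $R$ is a nonempty subset closed under addition and under multiplication by arbitrary elements of $R$. $R$ is Noetherian if it satisfies the ascending chain condition on ideals. An ideal $I$ is a $k$-ideal if $x+y\in I$ and $x\in I$ imply $y\in I$. The radical of an ideal $I$ is $\sqrt{I}=\{a\in R\mid a^n\in I \text{ for some } n\ge 1\}$. A proper ideal $Q$ is primary if $xy\in Q$ implies $x\in Q$ or $y\in\sqrt{Q}$. A primary decomposition $I=\bigcap_{i=1}^n Q_i$ (each $Q_i$ primary, $P_i=\sqrt{Q_i}$) is reduced if the $P_i$ are pairwise distinct and $I$ is not the intersection of any proper subfamily of the $Q_i$. (The empty intersection is understood as $R$.) *)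

(* A commutative semiring with 1 <> 0 (and 0 absorbing,
   which is part of MathComp's semiring axioms) is a comNzSemiRingType. *)
From mathcomp Require Import all_boot all_order all_algebra.
Set Implicit Arguments. Unset Strict Implicit. Unset Printing Implicit Defensive.
Import GRing.Theory.
Local Open Scope ring_scope.

Definition set_eq (R : Type) (A B : R -> Prop) : Prop := forall x, A x <-> B x.

Definition is_ideal (R : comNzSemiRingType) (I : R -> Prop) : Prop :=
  (exists x, I x) /\
  (forall x y, I x -> I y -> I (x + y)) /\
  (forall r x, I x -> I (r * x)).

Definition noetherian (R : comNzSemiRingType) : Prop :=
  forall J : nat -> R -> Prop,
    (forall n, is_ideal (J n)) ->
    (forall n x, J n x -> J n.+1 x) ->
    exists N, forall m, (N <= m)%N -> forall x, J m x -> J N x.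

Definition is_k_ideal (R : comNzSemiRingType) (I : R -> Prop) : Prop :=
  is_ideal I /\ (forall x y, I (x + y) -> I x -> I y).

Definition radical (R : comNzSemiRingType) (I : R -> Prop) : R -> Prop :=
  fun a => exists n, (1 <= n)%N /\ I (a ^+ n).

Definition is_primary (R : comNzSemiRingType) (Q : R -> Prop) : Prop :=
  is_ideal Q /\ (exists x, ~ Q x) /\
  (forall x y, Q (x * y) -> Q x \/ radical Q y).

Definition is_inter_of (R : comNzSemiRingType) (I : R -> Prop) (n : nat)
  (Q : 'I_n -> R -> Prop) (S : {set 'I_n}) : Prop :=
  set_eq I (fun x => forall i, i \in S -> Q i x).

Definition reduced_primary_decomposition (R : comNzSemiRingType)
  (I : R -> Prop) (n : nat) (Q : 'I_n -> R -> Prop) : Prop :=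
  (forall i, is_primary (Q i)) /\
  is_inter_of I Q setT /\
  (forall i j, i != j -> ~ set_eq (radical (Q i)) (radical (Q j))) /\
  (forall S : {set 'I_n}, S != setT -> ~ is_inter_of I Q S).

From mathcomp Require Import all_boot all_order all_algebra.
From mathcomp Require Import ring.
From Stdlib Require Import Classical ClassicalEpsilon.
Set Implicit Arguments. Unset Strict Implicit. Unset Printing Implicit Defensive.
Import GRing.Theory.
Local Open Scope ring_scope.

(* Take a k-ideal I maximal among those without a primary decomposition, and
   b outside I with (I : b) maximal among the proper colon ideals of I.  Then
   P = (I : b) is a prime k-ideal and A = (I : P) is a k-ideal strictly larger
   than I, hence decomposable.  An Artin-Rees type argument gives an ideal J
   with I ⊆ J ⊆ P and J ∩ A ⊆ I containing a power of every element of P;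
   its P-saturation Q is P-primary and I = A ∩ Q, a contradiction.  A
   decomposition of minimal length is reduced, since components with equal
   radicals can be merged and redundant components dropped. *)

Section Ideals.
Variable R : comNzSemiRingType.
Implicit Types (I J K P A Q : R -> Prop).

Lemma ideal0 I : is_ideal I -> I 0.
Proof. by move=> [[x Ix] [_ IM]]; rewrite -(mul0r x); apply: IM. Qed.

Lemma idealD I x y : is_ideal I -> I x -> I y -> I (x + y).
Proof. by move=> [_ [ID _]]; apply: ID. Qed.

Lemma idealM I r x : is_ideal I -> I x -> I (r * x).
Proof. by move=> [_ [_ IM]]; apply: IM. Qed.

Lemma idealMr I r x : is_ideal I -> I x -> I (x * r).
Proof. by move=> idI Ix; rewrite mulrC; apply: idealM. Qed.

Lemma ideal_expn I p m : is_ideal I -> I p -> (0 < m)%N -> I (p ^+ m).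
Proof. by move=> idI Ip; case: m => // m _; rewrite exprSr; apply: idealM. Qed.

Lemma noetherian_maximal (noeth : noetherian R) (F : (R -> Prop) -> Prop) :
  (forall J, F J -> is_ideal J) -> (exists J, F J) ->
  exists J, F J /\ forall E, F E -> (forall x, J x -> E x) -> forall x, E x -> J x.
Proof.
move=> idF [J0 FJ0]; apply: NNPP => no_max.
have grow (J : {J | F J}) : {E : {E | F E} | (forall x, sval J x -> sval E x)
    /\ exists x, sval E x /\ ~ sval J x}.
  case: J => J FJ; apply: constructive_indefinite_description.
  apply: NNPP => no_larger; apply: no_max; exists J; split => // E FE JE x Ex.
  apply: NNPP => nJx; apply: no_larger; exists (exist _ E FE); split => //.
  by exists x.
pose chain k := iter k (fun J : {J | F J} => sval (grow J)) (exist _ J0 FJ0).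
have [N stable] := noeth (fun k => sval (chain k))
  (fun k => idF _ (svalP (chain k)))
  (fun k x => (proj1 (svalP (grow (chain k)))) x).
have [_ [x [Nx nNx]]] := svalP (grow (chain N)).
by apply: nNx; apply: (stable N.+1 (leqnSn N)).
Qed.

Definition colon I c : R -> Prop := fun x => I (x * c).

Definition colon_set I P : R -> Prop := fun a => forall p, P p -> I (a * p).

Definition summand I : R -> Prop := fun x => exists y, I (x + y).

Lemma colon_ideal I c : is_ideal I -> is_ideal (colon I c).
Proof.
move=> idI; split; first by exists 0; rewrite /colon mul0r; apply: ideal0.
split; first by move=> x y Ix Iy; rewrite /colon mulrDl; apply: idealD.
by move=> r x Ix; rewrite /colon -mulrA; apply: idealM.
Qed.

Lemma colon_k_ideal I c : is_k_ideal I -> is_k_ideal (colon I c).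
Proof.
move=> [idI kI]; split; first exact: colon_ideal.
by move=> x y; rewrite /colon mulrDl; apply: kI.
Qed.

Lemma colon_set_k_ideal I P : is_k_ideal I -> is_k_ideal (colon_set I P).
Proof.
move=> [idI kI]; split; last first.
  move=> x y Ixy Ix p Pp; apply: (kI (x * p)); last exact: Ix.
  by rewrite -mulrDl; apply: Ixy.
split; first by exists 0 => p _; rewrite mul0r; apply: ideal0.
split; first by move=> x y Ix Iy p Pp; rewrite mulrDl; apply: idealD; auto.
by move=> r x Ix p Pp; rewrite -mulrA; apply: idealM; auto.
Qed.

Lemma summand_ideal I : is_ideal I -> is_ideal (summand I).
Proof.
move=> idI; split; first by exists 0, 0; rewrite addr0; apply: ideal0.
split.
  move=> x y [x' Ix] [y' Iy]; exists (x' + y').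
  by rewrite addrACA; apply: idealD.
by move=> r x [x' Ix]; exists (r * x'); rewrite -mulrDr; apply: idealM.
Qed.

Lemma colon_expn_stable (noeth : noetherian R) K p : is_ideal K ->
  exists c, forall k, (c <= k)%N -> forall s, colon K (p ^+ k) s -> colon K (p ^+ c) s.
Proof.
move=> idK; apply: (noeth (fun k => colon K (p ^+ k))) => [k | k s].
  exact: colon_ideal.
by rewrite /colon exprSr mulrA; apply: idealMr.
Qed.

Definition saturation P J : R -> Prop := fun r => exists u, ~ P u /\ J (u * r).

Lemma saturation_primary P J : is_ideal P -> ~ P 1 ->
  (forall u v, P (u * v) -> P u \/ P v) -> is_ideal J -> (forall x, J x -> P x) ->
  (forall p, P p -> exists m, (0 < m)%N /\ J (p ^+ m)) ->
  is_primary (saturation P J).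
Proof.
move=> idP nP1 primeP idJ JP Jpow; split; last split.
- split; first by exists 0, 1; rewrite mulr0; split => //; apply: ideal0.
  split.
    move=> x y [u1 [nPu1 Ju1]] [u2 [nPu2 Ju2]]; exists (u1 * u2); split.
      by case/primeP.
    have -> : u1 * u2 * (x + y) = u2 * (u1 * x) + u1 * (u2 * y) by ring.
    by apply: idealD => //; apply: idealM.
  move=> r x [u [nPu Ju]]; exists u; split => //.
  by rewrite mulrCA; apply: idealM.
- by exists 1 => -[u [nPu Ju]]; apply: nPu; apply: JP; rewrite -(mulr1 u).
- move=> x y [u [nPu Juxy]]; case: (classic (P y)) => [Py | nPy].
    right; have [m [m_gt0 Jym]] := Jpow y Py; exists m; split => //.
    by exists 1; rewrite mul1r.
  left; exists (u * y); split; first by case/primeP.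
  by rewrite mulrAC -mulrA.
Qed.

Lemma primary_cap_same_radical Q1 Q2 : is_primary Q1 -> is_primary Q2 ->
  set_eq (radical Q1) (radical Q2) -> is_primary (fun x => Q1 x /\ Q2 x).
Proof.
move=> [id1 [[x1 nQx1] prim1]] [id2 [_ prim2]] same_rad.
have rad_cap y : radical Q1 y -> radical (fun x => Q1 x /\ Q2 x) y.
  move=> rad1; have [a [a_gt0 Qa]] := rad1; have [b [b_gt0 Qb]] := (same_rad y).1 rad1.
  exists (a + b)%N; split; first by rewrite addn_gt0 a_gt0.
  by rewrite exprD; split; [apply: idealMr | apply: idealM].
split; last split.
- split; first by exists 0; split; apply: ideal0.
  split; first by move=> x y [? ?] [? ?]; split; apply: idealD.
  by move=> r x [? ?]; split; apply: idealM.
- by exists x1 => -[].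
- move=> x y [Q1xy Q2xy]; case: (classic (Q1 x /\ Q2 x)) => [|nQx]; first by left.
  right; apply: rad_cap; case: (classic (Q1 x)) => Q1x.
    by apply/same_rad; case: (prim2 x y Q2xy) => // Q2x; case: nQx.
  by case: (prim1 x y Q1xy).
Qed.

Definition is_primary_decomposition I n (Q : 'I_n -> R -> Prop) : Prop :=
  (forall i, is_primary (Q i)) /\ is_inter_of I Q setT.

Definition decomposable I : Prop :=
  exists n (Q : 'I_n -> R -> Prop), is_primary_decomposition I Q.

Lemma decomposable_total I : (forall x, I x) -> decomposable I.
Proof.
move=> Itot; exists 0%N, (fun _ _ => False); split; first by case.
by move=> x; split => // _; case.
Qed.

Lemma decomposable_cap I A Q0 : decomposable A -> is_primary Q0 ->
  set_eq I (fun x => A x /\ Q0 x) -> decomposable I.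
Proof.
move=> [n [Q [primQ interQ]]] primQ0 eqI.
exists n.+1, (fun k => if unlift ord_max k is Some i then Q i else Q0).
split; first by move=> k; case: (unlift ord_max k).
move=> x; rewrite eqI; split.
- move=> [Ax Q0x] k _; case: unliftP => [i _|_] //.
  exact: (interQ x).1 Ax i (in_setT i).
- move=> Qx; split.
    by apply/interQ => i _; move: (Qx (lift ord_max i) (in_setT _)); rewrite liftK.
  by move: (Qx ord_max (in_setT _)); rewrite unlift_none.
Qed.

Lemma primary_decomposition_restrict I n (Q : 'I_n -> R -> Prop) (S : {set 'I_n}) :
  (forall i, i \in S -> is_primary (Q i)) -> is_inter_of I Q S ->
  is_primary_decomposition I (fun k : 'I_#|S| => Q (enum_val k)).
Proof.
move=> primQ interQ; split; first by move=> k; apply: primQ; apply: enum_valP.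
move=> x; rewrite interQ; split; first by move=> Qx k _; apply: Qx; apply: enum_valP.
by move=> Qx i Si; have := Qx (enum_rank_in Si i) (in_setT _); rewrite enum_rankK_in.
Qed.

Lemma primary_decomposition_merge I n (Q : 'I_n -> R -> Prop) i j :
  is_primary_decomposition I Q -> i != j -> set_eq (radical (Q i)) (radical (Q j)) ->
  exists Q' : 'I_#|[set~ j]| -> R -> Prop, is_primary_decomposition I Q'.
Proof.
move=> [primQ interQ] neq_ij same_rad.
pose Qm k := if k == i then (fun x => Q i x /\ Q j x) else Q k.
eexists; apply: (@primary_decomposition_restrict I n Qm).
  move=> k _; rewrite /Qm; case: eqP => _; last exact: primQ.
  exact: primary_cap_same_radical.
move=> x; rewrite interQ; split.
  move=> Qx k _; rewrite /Qm; case: eqP => _; last exact: Qx.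
  by split; apply: Qx.
move=> Qmx k _; have Si : i \in [set~ j] by rewrite !inE neq_ij.
case: (eqVneq k j) => [-> | neq_kj].
  by have := Qmx i Si; rewrite /Qm eqxx => -[].
have Sk : k \in [set~ j] by rewrite !inE.
by have := Qmx k Sk; rewrite /Qm; case: eqP => [-> []|].
Qed.

Lemma minimal_primary_decomposition I : decomposable I ->
  exists n (Q : 'I_n -> R -> Prop), is_primary_decomposition I Q /\
    forall k (Q' : 'I_k -> R -> Prop), is_primary_decomposition I Q' -> (n <= k)%N.
Proof.
move=> [n0 [Q0 decQ0]]; elim/ltn_ind: n0 Q0 decQ0 => n IH Q decQ.
case: (classic (exists k (Q' : 'I_k -> R -> Prop),
  is_primary_decomposition I Q' /\ (k < n)%N)) => [[k [Q' [decQ' lt_kn]]] | no_shorter].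
  exact: IH lt_kn Q' decQ'.
exists n, Q; split => // k Q' decQ'; rewrite leqNgt; apply/negP => lt_kn.
by apply: no_shorter; exists k, Q'.
Qed.

Definition subtractive_over I J : Prop := forall j x, J j -> I (j + x) -> J x.

Definition separating I P A J : Prop :=
  [/\ is_ideal J, forall x, I x -> J x, forall x, J x -> P x,
      forall z, J z -> A z -> I z & subtractive_over I J].

End Ideals.

Section PowerExtension.
Variable R : comNzSemiRingType.
Variables (I P A J : R -> Prop) (p : R) (c M : nat).
Hypotheses (kI : is_k_ideal I) (kP : is_k_ideal P) (idA : is_ideal A).
Hypotheses (IA : forall x, I x -> A x) (AP : forall z q, A z -> P q -> I (z * q)).
Hypotheses (idJ : is_ideal J) (IJ : forall x, I x -> J x) (JP : forall x, J x -> P x).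
Hypotheses (JA : forall z, J z -> A z -> I z) (subJ : subtractive_over I J).
Hypothesis Pp : P p.
Hypothesis summand_stable :
  forall k, (c <= k)%N -> forall s, colon (summand I) (p ^+ k) s -> colon (summand I) (p ^+ c) s.
Hypothesis J_stable :
  forall k, (M <= k)%N -> forall u, colon J (p ^+ k) u -> colon J (p ^+ M) u.

Let idI : is_ideal I := kI.1.
Let n := M.+1.
Let m := (c + n)%N.

Definition extension : R -> Prop := fun x =>
  exists i, I i /\ exists j s v, [/\ J j, summand I v & x + i = j + s * p ^+ m + v * p ^+ n].

Lemma sub_extension x : J x -> extension x.
Proof.
move=> Jx; exists 0; split; first exact: ideal0.
exists x, 0, 0; split => //; last by rewrite !mul0r !addr0.
exact: ideal0 (summand_ideal idI).
Qed.

Lemma extension_ideal : is_ideal extension.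
Proof.
split; first by exists 0; apply: sub_extension; apply: ideal0.
split.
  move=> x y [i1 [Ii1 [j1 [s1 [v1 [Jj1 Vv1 Ex]]]]]] [i2 [Ii2 [j2 [s2 [v2 [Jj2 Vv2 Ey]]]]]].
  exists (i1 + i2); split; first exact: idealD.
  exists (j1 + j2), (s1 + s2), (v1 + v2); split; first exact: idealD.
    exact: idealD (summand_ideal idI) _ _.
  by rewrite addrACA Ex Ey; ring.
move=> r x [i [Ii [j [s [v [Jj Vv Ex]]]]]].
exists (r * i); split; first exact: idealM.
exists (r * j), (r * s), (r * v); split; first exact: idealM.
  exact: idealM (summand_ideal idI) _.
by rewrite -mulrDr Ex; ring.
Qed.

Lemma extension_sub x : extension x -> P x.
Proof.
move=> [i [Ii [j [s [v [Jj _ Ex]]]]]].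
apply: (kP.2 i x); last exact/JP/IJ.
have m_gt0 : (0 < m)%N by rewrite /m /n addnS.
rewrite addrC Ex; apply: idealD kP.1 _ _; first apply: idealD kP.1 _ _.
- exact: JP.
- by apply: idealM kP.1 _; apply: ideal_expn kP.1 _ _.
- by apply: idealM kP.1 _; apply: ideal_expn kP.1 _ _.
Qed.

Lemma extension_cap z : extension z -> A z -> I z.
Proof.
move=> [i [Ii [j [s [v [Jj _ Ez]]]]]] Az.
have Azi : A (z + i) by apply: idealD idA _ _ => //; apply: IA.
pose u := s * p ^+ c + v.
have Ezu : z + i = j + u * p ^+ n by rewrite Ez /u /m exprD; ring.
have Jupn1 : J (u * p ^+ n.+1).
  apply: (subJ (idealMr p idJ Jj)).
  have -> : j * p + u * p ^+ n.+1 = (z + i) * p by rewrite Ezu exprSr; ring.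
  exact: AP.
have Jupn : J (u * p ^+ n).
  have := J_stable (leqW (leqnSn M)) Jupn1.
  by rewrite /colon /n exprSr mulrA; apply: idealMr.
apply: (kI.2 i z) => //; rewrite addrC; apply: JA => //.
by rewrite Ezu; apply: idealD.
Qed.

(* Requiring [summand I v] is what puts an [I]-complement of an element of
   [extension] back into [extension]. *)
Lemma extension_subtractive : subtractive_over I extension.
Proof.
move=> x X [i [Ii [j [s [v [Jj [v' Ivv'] Ex]]]]]] IxX.
have IjY : I (j + (s * p ^+ m + v * p ^+ n + X)).
  have -> : j + (s * p ^+ m + v * p ^+ n + X) = (x + X) + i by rewrite [RHS]addrAC Ex; ring.
  exact: idealD.
have [t Ispct] : summand I (s * p ^+ c).
  apply: (summand_stable (leq_addr n c)); exists (j + v * p ^+ n + X).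
  by have -> : s * p ^+ m + (j + v * p ^+ n + X) = j + (s * p ^+ m + v * p ^+ n + X) by ring.
exists ((s * p ^+ c + t) * p ^+ n + (v + v') * p ^+ n).
split; first by apply: idealD idI _ _; apply: idealMr _ idI _.
exists (s * p ^+ m + v * p ^+ n + X), 0, (t + v'); split; first exact: subJ IjY.
  by apply: idealD (summand_ideal idI) _ _; [exists (s * p ^+ c) | exists v]; rewrite addrC.
by rewrite /m exprD; ring.
Qed.

Lemma separating_extension : exists E, separating I P A E /\
  (forall x, J x -> E x) /\ exists k, (0 < k)%N /\ E (p ^+ k).
Proof.
exists extension; split; last split; first split.
- exact: extension_ideal.
- by move=> x Ix; apply/sub_extension/IJ.
- exact: extension_sub.
- exact: extension_cap.
- exact: extension_subtractive.
- exact: sub_extension.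
exists m; split; first by rewrite /m /n addnS.
exists 0; split; first exact: ideal0.
exists 0, 1, 0; split; first exact: ideal0.
  exact: ideal0 (summand_ideal idI).
by rewrite mul1r mul0r !addr0 add0r.
Qed.

End PowerExtension.

Section Decomposition.
Variable R : comNzSemiRingType.
Hypothesis noeth : noetherian R.
Implicit Types (I J P A : R -> Prop).

Lemma separating_ideal_with_powers I P A : is_k_ideal I -> is_k_ideal P ->
  (forall x, I x -> P x) -> is_ideal A -> (forall x, I x -> A x) ->
  (forall z q, A z -> P q -> I (z * q)) ->
  exists J, separating I P A J /\ forall p, P p -> exists m, (0 < m)%N /\ J (p ^+ m).
Proof.
move=> kI kP IP idA IA AP.
have sepI : separating I P A I.
  by split=> // [|j x Ij Ijx]; [exact: kI.1 | exact: kI.2 j x Ijx Ij].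
have [J [sepJ maxJ]] := noetherian_maximal noeth (F := separating I P A)
  (fun J '(And5 idJ _ _ _ _) => idJ) (ex_intro _ I sepI).
exists J; split => // p Pp; have [idJ IJ JP JA subJ] := sepJ.
have [c summand_stable] := colon_expn_stable noeth p (summand_ideal kI.1).
have [M J_stable] := colon_expn_stable noeth p idJ.
have [E [sepE [JE [m [m_gt0 Epm]]]]] := separating_extension kI kP idA IA AP idJ IJ JP JA
  subJ Pp summand_stable J_stable.
by exists m; split => //; apply: maxJ sepE JE _ Epm.
Qed.

Section MaximalColon.
Variables (I : R -> Prop) (b : R).
Hypotheses (kI : is_k_ideal I) (nIb : ~ I b).
Hypothesis max_colon : forall c, ~ I c ->
  (forall x, colon I b x -> colon I c x) -> forall x, colon I c x -> colon I b x.

Lemma maximal_colon_proper : ~ colon I b 1.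
Proof. by rewrite /colon mul1r. Qed.

Lemma maximal_colon_prime u v : colon I b (u * v) -> colon I b u \/ colon I b v.
Proof.
move=> Iuvb; case: (classic (colon I b u)) => [|nIub]; [by left | right].
apply: (max_colon nIub); last by rewrite /colon mulrA (mulrC v).
by move=> x Ixb; rewrite /colon mulrCA; apply: idealM kI.1 _.
Qed.

Lemma maximal_colon_set x : ~ I x -> colon_set I (colon I b) x ->
  forall u, I (u * x) -> colon I b u.
Proof.
move=> nIx Ax; apply: (max_colon nIx).
by move=> y Iyb; rewrite /colon mulrC; apply: Ax.
Qed.

Lemma decomposable_of_maximal_colon :
  decomposable (colon_set I (colon I b)) -> decomposable I.
Proof.
move=> decA; pose P := colon I b; pose A := colon_set I P.
have kP : is_k_ideal P := colon_k_ideal b kI.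
have IA x : I x -> A x by move=> Ix q _; apply: idealMr kI.1 _.
have [idA _] : is_k_ideal A := colon_set_k_ideal P kI.
have [J [[idJ IJ JP JA _] Jpow]] := separating_ideal_with_powers kI kP
  (fun x Ix => idealMr b kI.1 Ix) idA IA (fun z q Az Pq => Az q Pq).
apply: (decomposable_cap decA (saturation_primary kP.1 maximal_colon_proper
  maximal_colon_prime idJ JP Jpow)) => x; split.
  move=> Ix; split; first exact: IA.
  by exists 1; split; [exact: maximal_colon_proper | rewrite mul1r; apply: IJ].
move=> [Ax [u [nPu Jux]]]; apply: NNPP => nIx; apply/nPu/(maximal_colon_set nIx Ax).
by apply: JA => //; apply: idealM idA _.
Qed.

End MaximalColon.

Lemma k_ideal_decomposable I : is_k_ideal I -> decomposable I.
Proof.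
move=> kI; apply: NNPP => nDI.
have [I0 [[kI0 nDI0] maxI0]] := noetherian_maximal noeth
  (F := fun J => is_k_ideal J /\ ~ decomposable J) (fun J FJ => FJ.1.1)
  (ex_intro _ I (conj kI nDI)).
case: (classic (I0 1)) => [I01 | nI01].
  by apply/nDI0/decomposable_total => x; rewrite -(mulr1 x); apply: idealM kI0.1 _.
have colon_family_ideal K : (exists c, ~ I0 c /\ K = colon I0 c) -> is_ideal K.
  by move=> [c [_ ->]]; apply: colon_ideal kI0.1.
have [_ [[b [nI0b ->]] maxb]] := noetherian_maximal noeth colon_family_ideal
  (ex_intro _ _ (ex_intro _ 1 (conj nI01 erefl))).
apply/nDI0/(decomposable_of_maximal_colon kI0 nI0b).
  by move=> c nI0c; apply: maxb; exists c.
apply: NNPP => nDA; apply: nI0b.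
apply: (maxI0 _ (conj (colon_set_k_ideal _ kI0) nDA)).
  by move=> x I0x q _; apply: idealMr kI0.1 _.
by move=> q I0qb; rewrite mulrC.
Qed.

End Decomposition.

Theorem theorem2p7 (R : comNzSemiRingType) (I : R -> Prop) :
  noetherian R -> is_k_ideal I ->
  exists (n : nat) (Q : 'I_n -> R -> Prop), reduced_primary_decomposition I Q.
Proof.
move=> noeth kI.
have [n [Q [[primQ interQ] minQ]]] :=
  minimal_primary_decomposition (k_ideal_decomposable noeth kI).
exists n, Q; split=> //; split=> //; split.
- move=> i j neq_ij same_rad.
  have [Q' decQ'] := primary_decomposition_merge (conj primQ interQ) neq_ij same_rad.
  have n_gt0 : (0 < n)%N by apply: leq_ltn_trans (ltn_ord i).
  by have := minQ _ _ decQ'; rewrite cardsC1 card_ord leqNgt ltn_predL n_gt0.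
- move=> S neqS interS.
  have ltS : (#|S| < n)%N.
    by rewrite -[n in (_ < n)%N]card_ord -cardsT proper_card // properT.
  have := minQ _ _ (primary_decomposition_restrict (fun i _ => primQ i) interS).
  by rewrite leqNgt ltS.
Qed.
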